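(* Fix $n\ge2$. The valuation distribution is not identified from the equilibrium bid distribution: there exist two model structures $(u,F_0,D)$ and $(\tilde u,\tilde F_0,\tilde D)$, both satisfying the assumptions in the context, with $F_0\ne\tilde F_0$, whose symmetric equilibria induce the same distribution $G(\cdot\mid n)$ of equilibrium bids.
   Context: A model structure $(u,F_0,D)$ for a first-price auction (no reserve price) with $n\ge2$ bidders consists of: a utility $u:\mathbb R_+\to\mathbb R_+$ with $u'>0$, $u''\le0$, $u(0)=0$; a valuation distribution $F_0$ on $[\underline v,\overline v]$ with continuous density $f_0>0$, from which the $n$ values are drawn i.i.d.; and a function $D(\gamma)=F^*(F_0^{-1}(\gamma))$, where bidders have maxmin expected utility over a weakly compact convex set $\Gamma$ of strictly increasing $C^1$ distributions on $[\underline v,\overline v]$ containing $F_0$ with least element $F^*\in\Gamma$ ($F^*\le F$ pointwise for all $F\in\Gamma$) having density $f^*>0$. A symmetric equilibrium is a strictly increasing $\beta_n$ such that for every value $v$, $x=v$ maximizes $u[v-\beta_n(x)]D[F_0(x)]^{n-1}$. The bid distribution is $G(b\mid n)=F_0(\beta_n^{-1}(b))$, the distribution of $\beta_n(v)$ for $v\sim F_0$. *)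

From Stdlib Require Import Reals Lra.
Open Scope R_scope.

Definition cdf_on (vl vh : R) (F : R -> R) : Prop :=
  (forall x, x <= vl -> F x = 0) /\ (forall x, vh <= x -> F x = 1).

Definition C1_density_on (vl vh : R) (F f : R -> R) : Prop :=
  (forall x, continuity_pt F x) /\
  (forall x, vl < x < vh -> derivable_pt_lim F x (f x)) /\
  (forall x, vl <= x <= vh ->
     limit1_in f (fun y => vl <= y <= vh) (f x) x).

Definition strictly_increasing_on (vl vh : R) (F : R -> R) : Prop :=
  forall x y, vl <= x -> x < y -> y <= vh -> F x < F y.

Definition C1_strict_cdf (vl vh : R) (F : R -> R) : Prop :=
  cdf_on vl vh F /\ strictly_increasing_on vl vh F /\
  exists f, C1_density_on vl vh F f.

Definition pos_density_cdf (vl vh : R) (F : R -> R) : Prop :=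
  cdf_on vl vh F /\
  exists f, C1_density_on vl vh F f /\ (forall x, vl <= x <= vh -> f x > 0).

Definition general_cdf_on (vl vh : R) (H : R -> R) : Prop :=
  (forall x, x < vl -> H x = 0) /\ (forall x, vh <= x -> H x = 1) /\
  (forall x y, x <= y -> H x <= H y) /\
  (forall x, limit1_in H (fun y => x < y) (H x) x).

(* Weak compactness of a set of probability measures on the compact
   interval [vl,vh]: by Prokhorov/Helly the space of all such measures is
   weakly (sequentially) compact and metrizable, so weak compactness of Gam
   amounts to weak sequential closedness: whenever a sequence in Gam
   converges weakly (i.e. at all continuity points of the limit cdf) to a
   distribution H on [vl,vh], then H belongs to Gam. *)
Definition weakly_compact (vl vh : R) (Gam : (R -> R) -> Prop) : Prop :=
  forall (Fk : nat -> R -> R) (H : R -> R),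
    (forall k, Gam (Fk k)) -> general_cdf_on vl vh H ->
    (forall x, continuity_pt H x -> Un_cv (fun k => Fk k x) (H x)) ->
    Gam H.

Definition convex_set (Gam : (R -> R) -> Prop) : Prop :=
  forall F G t, Gam F -> Gam G -> 0 <= t <= 1 ->
    Gam (fun x => t * F x + (1 - t) * G x).

(* Utility u : R+ -> R+ with u' > 0, u'' <= 0, u(0) = 0.  u is given on all
   of R (values at negative surplus must be specified for the deviation
   problem); we require it strictly increasing there, so that negative
   surplus gives negative utility. *)
Definition utility_ok (u : R -> R) : Prop :=
  u 0 = 0 /\ (forall x, 0 <= x -> 0 <= u x) /\
  (forall x y, x < y -> u x < u y) /\
  exists u1 u2 : R -> R, forall x, 0 <= x ->
    derivable_pt_lim u x (u1 x) /\ u1 x > 0 /\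
    derivable_pt_lim u1 x (u2 x) /\ u2 x <= 0.

(* (u, F0, D) is a model structure with support [vl,vh]:
   D(gamma) = F*(F0^{-1}(gamma)), encoded as D (F0 x) = F* x on [vl,vh]. *)
Definition model_structure (vl vh : R) (u F0 D : R -> R) : Prop :=
  vl < vh /\ utility_ok u /\ pos_density_cdf vl vh F0 /\
  exists (Gam : (R -> R) -> Prop) (Fs : R -> R),
    (forall F, Gam F -> C1_strict_cdf vl vh F) /\
    weakly_compact vl vh Gam /\ convex_set Gam /\
    Gam F0 /\ Gam Fs /\ (forall F, Gam F -> forall x, Fs x <= F x) /\
    pos_density_cdf vl vh Fs /\
    (forall x, vl <= x <= vh -> D (F0 x) = Fs x).

Definition sym_equilibrium (n : nat) (vl vh : R) (u F0 D beta : R -> R) : Prop :=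
  strictly_increasing_on vl vh beta /\
  forall v x, vl <= v <= vh -> vl <= x <= vh ->
    u (v - beta x) * (D (F0 x)) ^ (n - 1) <= u (v - beta v) * (D (F0 v)) ^ (n - 1).

(* G(b) = Pr(beta(V) <= b), V ~ F0; for strictly increasing beta and
   continuous F0 this is the sup of F0 v over {v in [vl,vh] | beta v <= b}
   (or 0 if that set is empty). *)
Definition bid_cdf_value (vl vh : R) (F0 beta : R -> R) (b g : R) : Prop :=
  is_lub (fun y => y = 0 \/ exists v, vl <= v <= vh /\ beta v <= b /\ y = F0 v) g.

(* Let bidders be risk neutral.  In model A there is no ambiguity and values
   are uniform on [0,1]; the equilibrium bid is betaA(v) = (n-1)/n * v.  In
   model B values have cdf F0B(x) = n x/(n-x) on [0, n/(n+1)] and bidders are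
   maxmin over the segment from F0B down to a least prior F*, chosen so that
   betaB = betaA o F0B solves their first-order condition: F*(x)^(n-1) is
   proportional to y^(n-1) (n + (n-1) y), with odds y = x/(1-x).  Since
   F0B(V) is uniform, betaB(V) has the same law as betaA(U).  In both models
   the equilibrium inequality reduces to the tangent-line bound
   n w y^(n-1) - (n-1) y^n <= w^n, i.e. to convexity of t^n. *)

From Stdlib Require Import Reals Lra FunctionalExtensionality.
From Coquelicot Require Import Coquelicot.
Open Scope R_scope.

Lemma ex_derive_continuity_pt (f : R -> R) (x : R) :
  ex_derive f x -> continuity_pt f x.
Proof. intros Hf; apply continuity_pt_filterlim, (ex_derive_continuous f), Hf. Qed.

Lemma limit1_in_of_continuity_pt (f : R -> R) (D : R -> Prop) (x : R) :
  continuity_pt f x -> limit1_in f D (f x) x.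
Proof.
  intros Hf eps Heps. destruct (Hf eps Heps) as [d [Hd Hfd]].
  exists d; split; [exact Hd|]. intros z [_ Hz].
  destruct (Req_dec z x) as [->|Hne].
  - simpl; unfold R_dist; rewrite Rminus_diag, Rabs_R0; exact Heps.
  - apply Hfd; repeat split; auto.
Qed.

Definition clamp (a b x : R) : R := Rmax a (Rmin b x).

Lemma clamp_id a b x : a <= x <= b -> clamp a b x = x.
Proof. intros; unfold clamp, Rmax, Rmin; repeat destruct Rle_dec; lra. Qed.

Lemma clamp_below a b x : a <= b -> x <= a -> clamp a b x = a.
Proof. intros; unfold clamp, Rmax, Rmin; repeat destruct Rle_dec; lra. Qed.

Lemma clamp_above a b x : a <= b -> b <= x -> clamp a b x = b.
Proof. intros; unfold clamp, Rmax, Rmin; repeat destruct Rle_dec; lra. Qed.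

Lemma clamp_in a b x : a <= b -> a <= clamp a b x <= b.
Proof. intros; unfold clamp, Rmax, Rmin; repeat destruct Rle_dec; lra. Qed.

Lemma clamp_continuous a b x : a <= b -> continuity_pt (clamp a b) x.
Proof.
  intros Hab eps Heps. exists eps; split; [exact Heps|].
  intros z [_ Hz]; simpl in *; unfold R_dist in *.
  unfold clamp, Rmax, Rmin in *; repeat destruct Rle_dec; split_Rabs; lra.
Qed.

Lemma pos_density_cdf_clamp a b (h h' : R -> R) :
  a < b -> h a = 0 -> h b = 1 ->
  (forall x, a <= x <= b -> is_derive h x (h' x)) ->
  (forall x, a <= x <= b -> continuity_pt h' x /\ 0 < h' x) ->
  pos_density_cdf a b (fun x => h (clamp a b x)).
Proof.
  intros Hab Ha Hb Hd Hd'. split.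
  { split; intros x Hx; [rewrite clamp_below|rewrite clamp_above]; auto; lra. }
  exists h'. split; [split; [|split]|]; try (intros x Hx; apply Hd'; lra).
  - intros x. apply (continuity_pt_comp (clamp a b) h).
    + apply clamp_continuous; lra.
    + apply ex_derive_continuity_pt. eexists. apply Hd, clamp_in; lra.
  - intros x Hx. apply is_derive_Reals.
    apply (is_derive_ext_loc h); [|apply Hd; lra].
    apply (locally_interval _ x a b); try (simpl; lra).
    intros y Hay Hyb; simpl in *. rewrite clamp_id; lra.
  - intros x Hx. apply limit1_in_of_continuity_pt, Hd', Hx.
Qed.

Lemma pos_density_strictly_increasing vl vh F :
  pos_density_cdf vl vh F -> strictly_increasing_on vl vh F.
Proof.
  intros [_ [f [[Fc [Fd _]] Fpos]]] x y Hx Hxy Hy.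
  destruct (MVT_gen F x y f) as [c [Hc HF]].
  - intros z Hz. apply is_derive_Reals, Fd.
    rewrite Rmin_left, Rmax_right in Hz; lra.
  - intros z _; apply Fc.
  - rewrite Rmin_left, Rmax_right in Hc by lra.
    assert (0 < f c * (y - x)) by (apply Rmult_lt_0_compat; [apply Fpos|]; lra).
    lra.
Qed.

Lemma pos_density_C1_strict_cdf vl vh F :
  pos_density_cdf vl vh F -> C1_strict_cdf vl vh F.
Proof.
  intros HF. split; [apply HF|]. split; [apply pos_density_strictly_increasing, HF|].
  destruct HF as [_ [f [Hf _]]]. exists f; exact Hf.
Qed.

Lemma pos_density_cdf_continuous vl vh F :
  pos_density_cdf vl vh F -> forall x, continuity_pt F x.
Proof. intros [_ [f [[Fc _] _]]]; exact Fc. Qed.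

Definition mixture (F G : R -> R) (t : R) : R -> R :=
  fun x => t * F x + (1 - t) * G x.

Definition segment (F G : R -> R) : (R -> R) -> Prop :=
  fun H => exists t, 0 <= t <= 1 /\ H = mixture F G t.

Lemma segment_convex F G : convex_set (segment F G).
Proof.
  intros H1 H2 s [t1 [Ht1 ->]] [t2 [Ht2 ->]] Hs.
  exists (s * t1 + (1 - s) * t2). split; [split; nra|].
  apply functional_extensionality; intro x; unfold mixture; ring.
Qed.

Lemma mixture_continuous F G t x :
  continuity_pt F x -> continuity_pt G x -> continuity_pt (mixture F G t) x.
Proof.
  intros HF HG. apply (continuity_pt_plus (fun x => t * F x) (fun x => (1 - t) * G x));
    [apply (continuity_pt_scal F)|apply (continuity_pt_scal G)]; assumption.
Qed.

Lemma mixture_C1_density vl vh F f G g t :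
  C1_density_on vl vh F f -> C1_density_on vl vh G g ->
  C1_density_on vl vh (mixture F G t) (mixture f g t).
Proof.
  intros [Fc [Fd Fl]] [Gc [Gd Gl]]. split; [|split].
  - intros x; apply mixture_continuous; auto.
  - intros x Hx. apply (derivable_pt_lim_plus (fun x => t * F x) (fun x => (1 - t) * G x));
      [apply (derivable_pt_lim_scal F)|apply (derivable_pt_lim_scal G)]; auto.
  - intros x Hx. apply (limit_plus (fun x => t * f x) (fun x => (1 - t) * g x));
      [apply (limit_mul (fun _ => t) f)|apply (limit_mul (fun _ => 1 - t) g)];
      auto; apply (limit_free (fun _ => _) _ x).
Qed.

Lemma mixture_C1_strict_cdf vl vh F G t :
  C1_strict_cdf vl vh F -> C1_strict_cdf vl vh G -> 0 <= t <= 1 ->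
  C1_strict_cdf vl vh (mixture F G t).
Proof.
  intros [[F0 F1] [Fi [f Hf]]] [[G0 G1] [Gi [g Hg]]] Ht. split; [split|split].
  - intros x Hx; unfold mixture; rewrite F0, G0 by auto; ring.
  - intros x Hx; unfold mixture; rewrite F1, G1 by auto; ring.
  - intros x y Hx Hxy Hy. unfold mixture.
    specialize (Fi x y Hx Hxy Hy). specialize (Gi x y Hx Hxy Hy).
    destruct (Rle_lt_dec t 0); nra.
  - exists (mixture f g t). apply mixture_C1_density; assumption.
Qed.

Section Nondecreasing.

Variable H : R -> R.
Hypothesis H_mono : forall x y, x <= y -> H x <= H y.

(* The two middle quarters of [a,b] are disjoint, so the one on which H rises
   less rises by at most half the rise of H on [a,b]. *)
Definition quarter_step (p : R * R) : R * R :=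
  let (a, b) := p in
  let p1 := a + (b - a) / 4 in
  let p2 := a + (b - a) / 2 in
  let p3 := a + 3 * (b - a) / 4 in
  if Rle_dec (H p2 - H p1) (H p3 - H p2) then (p1, p2) else (p2, p3).

Lemma quarter_step_spec p : fst p < snd p ->
  fst p < fst (quarter_step p) < snd (quarter_step p) /\
  snd (quarter_step p) < snd p /\
  H (snd (quarter_step p)) - H (fst (quarter_step p)) <= (H (snd p) - H (fst p)) / 2.
Proof.
  destruct p as [a b]; simpl; intros Hab. unfold quarter_step.
  pose proof (H_mono a (a + (b - a) / 4) ltac:(lra)).
  pose proof (H_mono (a + 3 * (b - a) / 4) b ltac:(lra)).
  destruct Rle_dec; simpl; repeat split; lra.
Qed.

Section Nested.

Variables a b : R.
Hypothesis Hab : a < b.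

Fixpoint nested (k : nat) : R * R :=
  match k with O => (a, b) | S k => quarter_step (nested k) end.

Lemma nested_lt k : fst (nested k) < snd (nested k).
Proof. induction k as [|k IH]; [exact Hab|]. apply (quarter_step_spec _ IH). Qed.

Lemma nested_S k :
  fst (nested k) < fst (nested (S k)) < snd (nested (S k)) /\
  snd (nested (S k)) < snd (nested k) /\
  H (snd (nested (S k))) - H (fst (nested (S k))) <=
    (H (snd (nested k)) - H (fst (nested k))) / 2.
Proof. exact (quarter_step_spec _ (nested_lt k)). Qed.

Lemma nested_left_mono i j : (i <= j)%nat -> fst (nested i) <= fst (nested j).
Proof. induction 1; [lra|]. destruct (nested_S m); lra. Qed.

Lemma nested_right_mono i j : (i <= j)%nat -> snd (nested j) <= snd (nested i).
Proof. induction 1; [lra|]. destruct (nested_S m) as [_ [? _]]; lra. Qed.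

Lemma nested_left_lt_right i j : fst (nested i) < snd (nested j).
Proof.
  destruct (Nat.le_ge_cases i j) as [Hij|Hji].
  - pose proof (nested_left_mono _ _ Hij). destruct (nested_S j); lra.
  - pose proof (nested_right_mono _ _ Hji). destruct (nested_S i); lra.
Qed.

Lemma nested_rise_le k :
  H (snd (nested k)) - H (fst (nested k)) <= (H b - H a) * (/ 2) ^ k.
Proof.
  induction k as [|k IH]; simpl; [lra|].
  destruct (nested_S k) as [_ [_ Hk]]. simpl in Hk. lra.
Qed.

End Nested.

Lemma nondecreasing_continuity_point a b :
  a < b -> exists y, a < y < b /\ continuity_pt H y.
Proof.
  intros Hab.
  set (lefts := fun z => exists k, z = fst (nested a b k)).
  destruct (completeness lefts) as [y [Hub Hlub]].
  { exists b. intros z [k ->]. apply Rlt_le, (nested_left_lt_right a b Hab k 0). }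
  { exists a, 0%nat; reflexivity. }
  assert (Hin : forall k, fst (nested a b k) < y < snd (nested a b k)).
  { intros k. destruct (nested_S a b Hab k) as [[A _] [B _]]. split.
    - apply Rlt_le_trans with (2 := Hub _ (ex_intro _ (S k) eq_refl)); exact A.
    - apply Rle_lt_trans with (2 := B), Hlub.
      intros z [j ->]. apply Rlt_le, nested_left_lt_right, Hab. }
  exists y. split; [apply (Hin 0%nat)|].
  intros eps Heps.
  assert (Hrise : 0 <= H b - H a) by (pose proof (H_mono a b); lra).
  destruct (pow_lt_1_zero (/ 2) ltac:(rewrite Rabs_pos_eq; lra) (eps / (H b - H a + 1)))
    as [k Hk]; [apply Rdiv_lt_0_compat; lra|].
  specialize (Hk k (le_n k)). rewrite Rabs_pos_eq in Hk by (apply pow_le; lra).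
  assert (Hsmall : (H b - H a) * (/ 2) ^ k < eps).
  { apply Rmult_lt_compat_l with (r := H b - H a + 1) in Hk; [|lra].
    replace ((H b - H a + 1) * (eps / (H b - H a + 1))) with eps in Hk by (field; lra).
    pose proof (pow_le (/ 2) k ltac:(lra)). nra. }
  pose proof (nested_rise_le a b Hab k).
  destruct (Hin k) as [Hl Hr].
  set (ak := fst (nested a b k)) in *. set (bk := snd (nested a b k)) in *.
  exists (Rmin (y - ak) (bk - y)). split; [apply Rmin_pos; lra|].
  intros z [_ Hz]. simpl in *. unfold R_dist in *.
  pose proof (Rmin_l (y - ak) (bk - y)). pose proof (Rmin_r (y - ak) (bk - y)).
  assert (Hz' : ak <= z <= bk) by (revert Hz; split_Rabs; lra).
  pose proof (H_mono _ _ (proj1 Hz')). pose proof (H_mono _ _ (proj2 Hz')).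
  pose proof (H_mono ak y ltac:(lra)). pose proof (H_mono y bk ltac:(lra)).
  split_Rabs; lra.
Qed.

(* Continuity points of a monotone function are dense, so agreeing with a
   continuous function there forces agreement everywhere. *)
Lemma nondecreasing_eq_continuous (F : R -> R) :
  (forall x, continuity_pt F x) ->
  (forall y, continuity_pt H y -> H y = F y) -> forall x, H x = F x.
Proof.
  intros Fc Hag x.
  destruct (Rtotal_order (H x) (F x)) as [Hlt|[Heq|Hgt]]; [exfalso| exact Heq |exfalso].
  - destruct (Fc x (F x - H x) ltac:(lra)) as [d [Hd Hf]].
    destruct (nondecreasing_continuity_point (x - d) x ltac:(lra)) as [y [Hy Hc]].
    pose proof (H_mono y x ltac:(lra)). rewrite (Hag y Hc) in *.
    assert (Hfy : R_dist (F y) (F x) < F x - H x).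
    { apply Hf. repeat split; [lra|]. simpl; unfold R_dist; split_Rabs; lra. }
    unfold R_dist in Hfy. revert Hfy; split_Rabs; lra.
  - destruct (Fc x (H x - F x) ltac:(lra)) as [d [Hd Hf]].
    destruct (nondecreasing_continuity_point x (x + d) ltac:(lra)) as [y [Hy Hc]].
    pose proof (H_mono x y ltac:(lra)). rewrite (Hag y Hc) in *.
    assert (Hfy : R_dist (F y) (F x) < H x - F x).
    { apply Hf. repeat split; [lra|]. simpl; unfold R_dist; split_Rabs; lra. }
    unfold R_dist in Hfy. revert Hfy; split_Rabs; lra.
Qed.

End Nondecreasing.

Lemma Un_cv_const (c : R) : Un_cv (fun _ => c) c.
Proof. apply is_lim_seq_Reals, is_lim_seq_const. Qed.

Lemma weakly_compact_singleton vl vh F :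
  (forall x, continuity_pt F x) -> weakly_compact vl vh (fun G => G = F).
Proof.
  intros Fc Fk H HFk [_ [_ [Hmono _]]] Hcv. apply functional_extensionality.
  apply nondecreasing_eq_continuous; auto. intros y Hy.
  apply (UL_sequence (fun k => Fk k y)); [apply Hcv, Hy|].
  rewrite (functional_extensionality _ (fun _ => F y)) by (intro k; rewrite HFk; reflexivity).
  apply Un_cv_const.
Qed.

(* The mixing weight of a member of the segment is read off at one point
   where F and G differ, and weak limits preserve it. *)
Lemma weakly_compact_segment vl vh F G :
  vl < vh -> (forall x, continuity_pt F x) -> (forall x, continuity_pt G x) ->
  (forall x, vl < x < vh -> G x < F x) -> weakly_compact vl vh (segment F G).
Proof.
  intros Hv Fc Gc HGF Fk H HFk [_ [_ [Hmono _]]] Hcv.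
  destruct (nondecreasing_continuity_point H Hmono vl vh Hv) as [y [Hy Hcy]].
  pose proof (HGF y Hy) as HGFy.
  set (weight := fun z => (z - G y) / (F y - G y)).
  assert (HFk' : forall k, 0 <= weight (Fk k y) <= 1 /\
                           Fk k = mixture F G (weight (Fk k y))).
  { intros k. destruct (HFk k) as [t [Ht ->]].
    replace (weight (mixture F G t y)) with t by (unfold weight, mixture; field; lra).
    split; [exact Ht|reflexivity]. }
  assert (Hw : Un_cv (fun k => weight (Fk k y)) (weight (H y))).
  { apply continuity_seq; [|apply Hcv, Hcy].
    apply ex_derive_continuity_pt. unfold weight. auto_derive. lra. }
  assert (Hw01 : 0 <= weight (H y) <= 1).
  { split; [apply (@Rle_cv_lim (fun _ => 0) (fun k => weight (Fk k y)) 0)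
          |apply (@Rle_cv_lim (fun k => weight (Fk k y)) (fun _ => 1) _ 1)];
      try (intro k; apply HFk'); auto using Un_cv_const. }
  exists (weight (H y)). split; [exact Hw01|].
  apply functional_extensionality, (nondecreasing_eq_continuous H Hmono).
  { intro x; apply mixture_continuous; auto. }
  intros z Hz. apply (UL_sequence (fun k => Fk k z)); [apply Hcv, Hz|].
  rewrite (functional_extensionality _ (fun k => mixture F G (weight (Fk k y)) z))
    by (intro k; rewrite <- (proj2 (HFk' k)); reflexivity).
  apply (continuity_seq (fun t => mixture F G t z)); [|exact Hw].
  apply ex_derive_continuity_pt. unfold mixture. auto_derive. exact I.
Qed.

Lemma utility_ok_id : utility_ok (fun z => z).
Proof.
  split; [reflexivity|]. split; [intros; lra|]. split; [intros; lra|].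
  exists (fun _ => 1), (fun _ => 0). intros x _.
  split; [apply derivable_pt_lim_id|]. split; [lra|].
  split; [apply derivable_pt_lim_const|lra].
Qed.

Lemma model_structure_ambiguity_neutral vl vh u F0 :
  vl < vh -> utility_ok u -> pos_density_cdf vl vh F0 ->
  model_structure vl vh u F0 (fun q => q).
Proof.
  intros Hv Hu HF0. split; [exact Hv|]. split; [exact Hu|]. split; [exact HF0|].
  exists (fun F => F = F0), F0.
  split; [|split; [|split; [|split; [|split; [|split; [|split]]]]]].
  - intros F ->. apply pos_density_C1_strict_cdf, HF0.
  - apply weakly_compact_singleton, (pos_density_cdf_continuous vl vh), HF0.
  - intros F G t -> -> _. apply functional_extensionality; intro x; ring.
  - reflexivity.
  - reflexivity.
  - intros F -> x. lra.
  - exact HF0.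
  - reflexivity.
Qed.

Lemma model_structure_segment vl vh u F0 Fs D :
  vl < vh -> utility_ok u -> pos_density_cdf vl vh F0 -> pos_density_cdf vl vh Fs ->
  (forall x, vl <= x <= vh -> Fs x <= F0 x) ->
  (forall x, vl < x < vh -> Fs x < F0 x) ->
  (forall x, vl <= x <= vh -> D (F0 x) = Fs x) ->
  model_structure vl vh u F0 D.
Proof.
  intros Hv Hu HF0 HFs Hle Hlt HD.
  split; [exact Hv|]. split; [exact Hu|]. split; [exact HF0|].
  exists (segment F0 Fs), Fs.
  split; [|split; [|split; [|split; [|split; [|split; [|split]]]]]].
  - intros F [t [Ht ->]]. apply mixture_C1_strict_cdf; auto using pos_density_C1_strict_cdf.
  - apply weakly_compact_segment; eauto using pos_density_cdf_continuous.
  - apply segment_convex.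
  - exists 1. split; [lra|]. apply functional_extensionality; intro x; unfold mixture; ring.
  - exists 0. split; [lra|]. apply functional_extensionality; intro x; unfold mixture; ring.
  - intros F [t [Ht ->]] x. unfold mixture.
    destruct HF0 as [[F0_lo F0_hi] _], HFs as [[Fs_lo Fs_hi] _].
    assert (Fs x <= F0 x).
    { destruct (Rle_lt_dec x vl); [rewrite Fs_lo, F0_lo by lra; lra|].
      destruct (Rle_lt_dec vh x); [rewrite Fs_hi, F0_hi by lra; lra|].
      apply Hle; lra. }
    nra.
  - exact HFs.
  - exact HD.
Qed.

Lemma pow_tangent_le (m : nat) (w y : R) : 0 <= w -> 0 <= y ->
  INR (S m) * w * y ^ m - INR m * y ^ S m <= w ^ S m.
Proof.
  intros Hw Hy. induction m as [|m IH]; [simpl; lra|].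
  rewrite !S_INR in *. simpl pow in *.
  assert (0 <= y ^ m) by (apply pow_le, Hy).
  assert (0 <= (INR m + 1) * y ^ m * ((w - y) * (w - y))).
  { apply Rmult_le_pos; [|apply Rle_0_sqr]. pose proof (pos_INR m). nra. }
  nra.
Qed.

Lemma bid_cdf_value_reparam vl vh F0 beta vl' vh' F0' beta' (phi : R -> R) :
  (forall v, vl <= v <= vh ->
     vl' <= phi v <= vh' /\ F0' (phi v) = F0 v /\ beta' (phi v) = beta v) ->
  (forall v', vl' <= v' <= vh' -> exists v, vl <= v <= vh /\ phi v = v') ->
  forall b g g', bid_cdf_value vl vh F0 beta b g ->
                 bid_cdf_value vl' vh' F0' beta' b g' -> g = g'.
Proof.
  intros Hphi Hsurj b g g' Hg [Hub' Hleast']. apply (is_lub_u _ _ _ Hg). split.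
  - intros z [->|[v [Hv [Hb ->]]]]; apply Hub'; [left; reflexivity|right].
    destruct (Hphi v Hv) as [Hv' [HF HB]].
    exists (phi v). split; [exact Hv'|]. split; [congruence|symmetry; exact HF].
  - intros M HM. apply Hleast'. intros z [->|[v' [Hv' [Hb ->]]]]; apply HM;
      [left; reflexivity|right].
    destruct (Hsurj v' Hv') as [v [Hv <-]]. destruct (Hphi v Hv) as [_ [HF HB]].
    exists v. split; [exact Hv|]. split; congruence.
Qed.

Lemma Rpower_1_l e : Rpower 1 e = 1.
Proof. unfold Rpower; rewrite ln_1, Rmult_0_r; apply exp_0. Qed.

Lemma Rpower_le_1 q e : 0 < q <= 1 -> 0 <= e -> Rpower q e <= 1.
Proof. intros. rewrite <- (Rpower_1_l e). apply Rle_Rpower_l; lra. Qed.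

Lemma Rpower_lt_1 q e : 0 < q < 1 -> 0 < e -> Rpower q e < 1.
Proof. intros. rewrite <- (Rpower_1_l e). apply Rlt_Rpower_l; lra. Qed.

Lemma uniform_pos_density : pos_density_cdf 0 1 (clamp 0 1).
Proof.
  apply (pos_density_cdf_clamp 0 1 (fun z => z) (fun _ => 1)); try lra.
  - intros x _. auto_derive; [exact I|ring].
  - intros x _. split; [apply continuity_pt_const; intros ? ?; reflexivity|lra].
Qed.

Section Models.

Variable N : R.
Hypothesis HN : 2 <= N.

Definition betaA (x : R) := (N - 1) / N * x.

Lemma sym_equilibrium_A (n : nat) : INR n = N ->
  sym_equilibrium n 0 1 (fun z => z) (clamp 0 1) (fun q => q) betaA.
Proof.
  intros Hn. split.
  { intros x y _ Hxy _. unfold betaA.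
    apply Rmult_lt_compat_l; [apply Rdiv_lt_0_compat|]; lra. }
  intros v x Hv Hx. rewrite !clamp_id by lra.
  destruct n as [|m]; [simpl in Hn; lra|].
  replace (S m - 1)%nat with m by (simpl; symmetry; apply Nat.sub_0_r).
  pose proof (pow_tangent_le m v x (proj1 Hv) (proj1 Hx)) as Htan.
  rewrite Hn in Htan. rewrite S_INR in Hn. replace (INR m) with (N - 1) in Htan by lra.
  simpl pow in Htan. unfold betaA.
  replace ((v - (N - 1) / N * x) * x ^ m)
    with (/ N * (N * v * x ^ m - (N - 1) * (x * x ^ m))) by (field; lra).
  replace ((v - (N - 1) / N * v) * v ^ m) with (/ N * (v * v ^ m)) by (field; lra).
  apply Rmult_le_compat_l; [left; apply Rinv_0_lt_compat|]; lra.
Qed.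

Definition vhB := N / (N + 1).
Definition F0B (x : R) := N * x / (N - x).
Definition QB (x : R) := (N - x) / ((1 - x) * (N * N)).
Definition FsB (x : R) := x / ((1 - x) * N) * Rpower (QB x) (/ (N - 1)).

Lemma vhB_bounds : 0 < vhB < 1.
Proof.
  unfold vhB. split; [apply Rdiv_lt_0_compat; lra|].
  apply Rmult_lt_reg_r with (N + 1); [lra|]. field_simplify; lra.
Qed.

Lemma QB_pos x : x < 1 -> 0 < QB x.
Proof. intros. unfold QB. apply Rdiv_lt_0_compat; [lra|]. apply Rmult_lt_0_compat; nra. Qed.

Lemma le_vhB x : x <= vhB <-> x * (N + 1) <= N.
Proof. unfold vhB. symmetry; apply Rle_div_r; lra. Qed.

Lemma lt_vhB x : x < vhB <-> x * (N + 1) < N.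
Proof. unfold vhB. symmetry; apply Rlt_div_r; lra. Qed.

Lemma QB_le_1 x : 0 <= x <= vhB -> QB x <= 1.
Proof.
  intros [Hx0 Hx]. apply le_vhB in Hx. pose proof vhB_bounds.
  unfold QB. apply Rle_div_l; [apply Rmult_lt_0_compat; nra|]. nra.
Qed.

Lemma QB_lt_1 x : 0 <= x < vhB -> QB x < 1.
Proof.
  intros [Hx0 Hx]. apply lt_vhB in Hx. pose proof vhB_bounds.
  unfold QB. apply Rlt_div_l; [apply Rmult_lt_0_compat; nra|]. nra.
Qed.

Lemma F0B_0 : F0B 0 = 0.
Proof. unfold F0B, Rdiv. ring. Qed.

Lemma F0B_vhB : F0B vhB = 1.
Proof. unfold F0B, vhB. field. split; [lra|]. nra. Qed.

Lemma F0B_pos_density : pos_density_cdf 0 vhB (fun x => F0B (clamp 0 vhB x)).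
Proof.
  pose proof vhB_bounds.
  apply (pos_density_cdf_clamp _ _ _ (fun x => N * N / ((N - x) * (N - x))));
    [lra|apply F0B_0|apply F0B_vhB| |].
  - intros x Hx. unfold F0B. auto_derive; [lra|]. field; lra.
  - intros x Hx. split.
    + apply ex_derive_continuity_pt. auto_derive. nra.
    + apply Rdiv_lt_0_compat; nra.
Qed.

Lemma FsB_0 : FsB 0 = 0.
Proof. unfold FsB, Rdiv. ring. Qed.

Lemma FsB_vhB : FsB vhB = 1.
Proof.
  assert (HQ : QB vhB = 1) by (unfold QB, vhB; field; split; lra).
  unfold FsB. rewrite HQ, Rpower_1_l. unfold vhB. field; split; lra.
Qed.

Lemma FsB_pos_density : pos_density_cdf 0 vhB (fun x => FsB (clamp 0 vhB x)).
Proof.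
  pose proof vhB_bounds.
  apply (pos_density_cdf_clamp _ _ _
           (fun x => Rpower (QB x) (/ (N - 1)) / ((1 - x) * (1 - x) * (N - x))));
    [lra|apply FsB_0|apply FsB_vhB| |].
  - intros x Hx. pose proof (QB_pos x ltac:(lra)) as HQ. unfold FsB, Rpower.
    unfold QB in *. auto_derive.
    + repeat split; try exact HQ; repeat apply Rmult_integral_contrapositive_currified; lra.
    + set (E := exp _). field. lra.
  - intros x Hx. pose proof (QB_pos x ltac:(lra)) as HQ. split.
    + apply ex_derive_continuity_pt. unfold Rpower, QB in *. auto_derive.
      repeat split; try exact HQ; repeat apply Rmult_integral_contrapositive_currified; lra.
    + apply Rdiv_lt_0_compat; [apply exp_pos|]. apply Rmult_lt_0_compat; nra.
Qed.

Lemma FsB_eq_F0B_mul x : x < 1 ->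
  FsB x = F0B x * Rpower (QB x) (N / (N - 1)).
Proof.
  intros Hx. pose proof (QB_pos x Hx) as HQ.
  replace (N / (N - 1)) with (/ (N - 1) + 1) by (field; lra).
  rewrite Rpower_plus, Rpower_1 by exact HQ.
  unfold FsB, F0B, QB. field. repeat split; lra.
Qed.

Lemma FsB_le_F0B x : 0 <= x <= vhB -> FsB x <= F0B x.
Proof.
  intros Hx. pose proof vhB_bounds.
  rewrite FsB_eq_F0B_mul by lra.
  assert (0 <= F0B x) by (unfold F0B; apply Rdiv_le_0_compat; nra).
  assert (Rpower (QB x) (N / (N - 1)) <= 1).
  { apply Rpower_le_1; [split; [apply QB_pos; lra|apply QB_le_1, Hx]|].
    apply Rdiv_le_0_compat; lra. }
  nra.
Qed.

Lemma FsB_lt_F0B x : 0 < x < vhB -> FsB x < F0B x.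
Proof.
  intros Hx. pose proof vhB_bounds.
  rewrite FsB_eq_F0B_mul by lra.
  assert (0 < F0B x) by (unfold F0B; apply Rdiv_lt_0_compat; nra).
  assert (Rpower (QB x) (N / (N - 1)) < 1).
  { apply Rpower_lt_1; [split; [apply QB_pos; lra|apply QB_lt_1; lra]|].
    apply Rdiv_lt_0_compat; lra. }
  nra.
Qed.

Definition F0B_inv (q : R) := N * q / (N + q).
Definition DB (q : R) := FsB (F0B_inv q).

Lemma F0B_inv_F0B x : 0 <= x <= vhB -> F0B_inv (F0B x) = x.
Proof.
  intros Hx. pose proof vhB_bounds. unfold F0B_inv, F0B.
  field. split; [lra|]. replace (N * (N - x) + N * x) with (N * N) by ring. nra.
Qed.

Lemma F0B_F0B_inv q : 0 <= q <= 1 ->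
  0 <= F0B_inv q <= vhB /\ F0B (F0B_inv q) = q.
Proof.
  intros Hq. unfold F0B_inv, F0B. split; [split|].
  - apply Rdiv_le_0_compat; nra.
  - apply le_vhB.
    replace (N * q / (N + q) * (N + 1)) with (N * q * (N + 1) / (N + q)) by (field; lra).
    apply Rle_div_l; [lra|]. nra.
  - field. split; [lra|]. replace (N * (N + q) - N * q) with (N * N) by ring. nra.
Qed.

Lemma model_structure_B :
  model_structure 0 vhB (fun z => z) (fun x => F0B (clamp 0 vhB x)) DB.
Proof.
  pose proof vhB_bounds.
  apply model_structure_segment with (Fs := fun x => FsB (clamp 0 vhB x));
    [lra|apply utility_ok_id|apply F0B_pos_density|apply FsB_pos_density| | |];
    intros x Hx; rewrite clamp_id by lra.
  - apply FsB_le_F0B, Hx.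
  - apply FsB_lt_F0B, Hx.
  - unfold DB. rewrite F0B_inv_F0B by exact Hx. reflexivity.
Qed.

Definition betaB (x : R) := betaA (F0B x).

Lemma FsB_pow (m : nat) x : INR (S m) = N -> x < 1 ->
  FsB x ^ m = (x / ((1 - x) * N)) ^ m * QB x.
Proof.
  intros Hm Hx. rewrite S_INR in Hm. unfold FsB at 1.
  rewrite Rpow_mult_distr, <- (Rpower_pow m (Rpower _ _)) by (unfold Rpower; apply exp_pos).
  rewrite Rpower_mult. replace (INR m) with (N - 1) by lra. rewrite Rinv_l by lra.
  rewrite Rpower_1 by (apply QB_pos, Hx). reflexivity.
Qed.

(* In the odds w = v/(1-v) and y = x/(1-x), the profit of type v bidding as
   type x is, up to a factor depending on v only, the tangent to t^(m+1) at y
   evaluated at w. *)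
Lemma profit_B (m : nat) v x : INR (S m) = N -> v < 1 -> x < 1 ->
  (v - betaB x) * FsB x ^ m =
  (1 - v) / (N * N) * (/ N) ^ m *
  (N * (v / (1 - v)) * (x / (1 - x)) ^ m - (N - 1) * (x / (1 - x)) ^ S m).
Proof.
  intros Hm Hv Hx. rewrite (FsB_pow m x Hm Hx).
  replace (x / ((1 - x) * N)) with (x / (1 - x) * / N) by (field; lra).
  rewrite Rpow_mult_distr, <- tech_pow_Rmult.
  set (P := (x / (1 - x)) ^ m). set (A := (/ N) ^ m).
  unfold betaB, betaA, F0B, QB. field. repeat split; lra.
Qed.

Lemma F0B_in_01 x : 0 <= x <= vhB -> 0 <= F0B x <= 1.
Proof.
  intros [Hx0 Hx]. pose proof vhB_bounds. apply le_vhB in Hx as Hx'.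
  unfold F0B. split; [apply Rdiv_le_0_compat; nra|].
  apply Rle_div_l; lra.
Qed.

Lemma sym_equilibrium_B (n : nat) : INR n = N ->
  sym_equilibrium n 0 vhB (fun z => z) (fun x => F0B (clamp 0 vhB x)) DB betaB.
Proof.
  intros Hn. pose proof vhB_bounds. split.
  { intros x y Hx Hxy Hy. unfold betaB, betaA.
    apply Rmult_lt_compat_l; [apply Rdiv_lt_0_compat; lra|].
    pose proof (pos_density_strictly_increasing _ _ _ F0B_pos_density x y Hx Hxy Hy) as Hinc.
    cbv beta in Hinc. rewrite !clamp_id in Hinc by lra. exact Hinc. }
  intros v x Hv Hx. rewrite !clamp_id by lra. unfold DB. rewrite !F0B_inv_F0B by lra.
  destruct n as [|m]; [simpl in Hn; lra|].
  replace (S m - 1)%nat with m by (simpl; symmetry; apply Nat.sub_0_r).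
  rewrite !(profit_B m) by lra.
  set (w := v / (1 - v)). set (y := x / (1 - x)).
  assert (0 <= w) by (apply Rdiv_le_0_compat; lra).
  assert (0 <= y) by (apply Rdiv_le_0_compat; lra).
  pose proof (pow_tangent_le m w y) as Htan. rewrite Hn in Htan.
  rewrite S_INR in Hn. replace (INR m) with (N - 1) in Htan by lra.
  apply Rmult_le_compat_l.
  - apply Rmult_le_pos; [apply Rdiv_le_0_compat; nra|apply pow_le].
    left; apply Rinv_0_lt_compat; lra.
  - rewrite <- !tech_pow_Rmult in *. nra.
Qed.

Lemma bid_cdf_A_eq_B b g g' :
  bid_cdf_value 0 1 (clamp 0 1) betaA b g ->
  bid_cdf_value 0 vhB (fun x => F0B (clamp 0 vhB x)) betaB b g' -> g = g'.
Proof.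
  pose proof vhB_bounds.
  apply (bid_cdf_value_reparam _ _ _ _ _ _ _ _ F0B_inv).
  - intros v Hv. destruct (F0B_F0B_inv v Hv) as [Hv' HF].
    rewrite clamp_id, clamp_id by lra. unfold betaB. rewrite HF. auto.
  - intros v' Hv'. exists (F0B v'). split; [apply F0B_in_01, Hv'|].
    apply F0B_inv_F0B, Hv'.
Qed.

End Models.

Theorem proposition1 (n : nat) (hn : (2 <= n)%nat) :
  exists (vl vh : R) (u F0 D beta : R -> R)
         (vl' vh' : R) (u' F0' D' beta' : R -> R),
    model_structure vl vh u F0 D /\
    model_structure vl' vh' u' F0' D' /\
    F0 <> F0' /\
    sym_equilibrium n vl vh u F0 D beta /\
    sym_equilibrium n vl' vh' u' F0' D' beta' /\
    (forall b g g', bid_cdf_value vl vh F0 beta b g ->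
                    bid_cdf_value vl' vh' F0' beta' b g' -> g = g').
Proof.
  set (N := INR n).
  assert (HN : 2 <= N) by (apply (le_INR 2), hn).
  pose proof (vhB_bounds N HN) as Hvh.
  exists 0, 1, (fun z => z), (clamp 0 1), (fun q => q), (betaA N).
  exists 0, (vhB N), (fun z => z), (fun x => F0B N (clamp 0 (vhB N) x)), (DB N), (betaB N).
  split; [apply model_structure_ambiguity_neutral;
          [lra|apply utility_ok_id|apply uniform_pos_density]|].
  split; [exact (model_structure_B N HN)|].
  split.
  { intros Heq. apply (f_equal (fun F => F (vhB N))) in Heq.
    rewrite !clamp_id, F0B_vhB in Heq by lra. lra. }
  split; [exact (sym_equilibrium_A N HN n eq_refl)|].
  split; [exact (sym_equilibrium_B N HN n eq_refl)|].
  exact (bid_cdf_A_eq_B N HN).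
Qed.
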